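(* Let $\Omega\subset\mathbb{R}^3$ be open, $T>0$, and let $A:[0,T]\times\Omega\to\mathbb{T}$ and $\gamma:[0,T]\times\Omega\to\mathbb{S}$ be sufficiently smooth (classical) fields solving $$\operatorname{div} A=0,\qquad A_t+\operatorname{curl} S\gamma=0,\qquad S\gamma_t-\operatorname{sym}\operatorname{curl} A=0,\qquad \operatorname{div}\operatorname{div} S\gamma=0,$$ with initial conditions $A(0)=A_0$, $\gamma(0)=\gamma_0$. Define the gauge functions $$\alpha:=\tfrac12\operatorname{tr}\gamma,\qquad \beta(t):=\tfrac12\int_0^t \operatorname{div} S\gamma(s)\,ds+\operatorname{vskw} A_0 .$$ Then $\gamma$ satisfies the linearized York version of the ADM equations: $$\gamma_{tt}+S\operatorname{inc}\gamma-2\operatorname{hess}\alpha-2\operatorname{def}\beta_t=0,\qquad \operatorname{div} S(\gamma_t-2\operatorname{def}\beta)=0,\qquad \operatorname{div}\operatorname{div} S\gamma=0 .$$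
   Context: $\mathbb{M}$ is the space of real $3\times3$ matrices, $\mathbb{S}$ the symmetric ones, $\mathbb{T}$ the trace-free ones. For $M\in\mathbb{M}$: $S(M):=M^\top-\operatorname{tr}(M)I$; $\operatorname{sym}M$ is the symmetric part; $(\operatorname{vskw}M)_i:=-\tfrac12\epsilon_{ijk}M_{jk}$ (Levi-Civita symbol, summation convention). Differential operators act column-wise on matrix fields: $(\operatorname{curl}M)_{ij}=\epsilon_{ikl}\partial_kM_{lj}$, $(\operatorname{div}M)_i=\partial_jM_{ji}$; for a vector field $v$, $(\operatorname{grad}v)_{ij}=\partial_iv_j$, $\operatorname{def}v:=\operatorname{sym}\operatorname{grad}v$; for a scalar $u$, $\operatorname{hess}u$ is the Hessian matrix; $\operatorname{div}\operatorname{div}\sigma:=\operatorname{div}(\operatorname{div}\sigma)$; $\operatorname{inc}M:=\operatorname{curl}\big((\operatorname{curl}M)^\top\big)$. Subscript $t$ denotes time derivative. *)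

From Stdlib Require Import Reals Lra List.
From Coquelicot Require Import Coquelicot.
Open Scope R_scope.

Definition R3 : Type := (R * R * R)%type.

Definition coord (x : R3) (k : nat) : R :=
  match k with
  | O => fst (fst x)
  | S O => snd (fst x)
  | _ => snd x
  end.

Definition upd (x : R3) (k : nat) (s : R) : R3 :=
  match k with
  | O => (s, snd (fst x), snd x)
  | S O => (fst (fst x), s, snd x)
  | _ => (fst (fst x), snd (fst x), s)
  end.

Definition sum3 (f : nat -> R) : R := f 0%nat + f 1%nat + f 2%nat.

Definition kron (i j : nat) : R := if Nat.eqb i j then 1 else 0.

Definition eps (i j k : nat) : R :=
  match i, j, k with
  | 0%nat, 1%nat, 2%nat | 1%nat, 2%nat, 0%nat | 2%nat, 0%nat, 1%nat => 1
  | 0%nat, 2%nat, 1%nat | 2%nat, 1%nat, 0%nat | 1%nat, 0%nat, 2%nat => -1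
  | _, _, _ => 0
  end.

(** Fields on space-time: scalar, vector and 3x3-matrix valued
    (indices 0,1,2 only are meaningful). *)
Definition sfield : Type := R -> R3 -> R.
Definition vfield : Type := R -> R3 -> nat -> R.
Definition mfield : Type := R -> R3 -> nat -> nat -> R.

Definition dt (g : sfield) : sfield := fun t x => Derive (fun s => g s x) t.
Definition dx (k : nat) (g : sfield) : sfield :=
  fun t x => Derive (fun s => g t (upd x k s)) (coord x k).

Definition pd (d : nat) (g : sfield) : sfield :=
  match d with O => dt g | S k => dx k g end.

Definition ex_pd (d : nat) (g : sfield) (t : R) (x : R3) : Prop :=
  match d with
  | O => ex_derive (fun s => g s x) t
  | S k => ex_derive (fun s => g t (upd x k s)) (coord x k)
  end.

Definition iter_pd (l : list nat) (g : sfield) : sfield := fold_right pd g l.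

Definition smooth_on (U : R -> R3 -> Prop) (g : sfield) : Prop :=
  forall (l : list nat) (t : R) (x : R3), U t x ->
    (forall d, (d <= 3)%nat -> ex_pd d (iter_pd l g) t x) /\
    continuous (fun p : R * R3 => iter_pd l g (fst p) (snd p)) (t, x).

Definition smooth_on_m (U : R -> R3 -> Prop) (F : mfield) : Prop :=
  forall i j, (i < 3)%nat -> (j < 3)%nat -> smooth_on U (fun t x => F t x i j).

Definition mat : Type := nat -> nat -> R.
Definition tr (M : mat) : R := sum3 (fun i => M i i).
Definition trans (M : mat) : mat := fun i j => M j i.
Definition Sop (M : mat) : mat := fun i j => M j i - tr M * kron i j.
Definition sym (M : mat) : mat := fun i j => (M i j + M j i) / 2.
Definition vskw (M : mat) : nat -> R :=
  fun i => - / 2 * sum3 (fun j => sum3 (fun k => eps i j k * M j k)).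

Definition is_sym (M : mat) : Prop :=
  forall i j, (i < 3)%nat -> (j < 3)%nat -> M i j = M j i.
Definition is_tracefree (M : mat) : Prop := tr M = 0.

Definition Sf (F : mfield) : mfield := fun t x => Sop (F t x).
Definition symf (F : mfield) : mfield := fun t x => sym (F t x).
Definition transf (F : mfield) : mfield := fun t x => trans (F t x).
Definition trf (F : mfield) : sfield := fun t x => tr (F t x).

Definition dtM (F : mfield) : mfield :=
  fun t x i j => dt (fun t' x' => F t' x' i j) t x.
Definition dtV (v : vfield) : vfield :=
  fun t x i => dt (fun t' x' => v t' x' i) t x.

(** Spatial differential operators (column-wise on matrix fields). *)
Definition curl (F : mfield) : mfield :=
  fun t x i j =>
    sum3 (fun k => sum3 (fun l => eps i k l * dx k (fun t' x' => F t' x' l j) t x)).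
Definition div (F : mfield) : vfield :=
  fun t x i => sum3 (fun j => dx j (fun t' x' => F t' x' j i) t x).
Definition divv (v : vfield) : sfield :=
  fun t x => sum3 (fun i => dx i (fun t' x' => v t' x' i) t x).
Definition divdiv (F : mfield) : sfield := divv (div F).
Definition grad (v : vfield) : mfield :=
  fun t x i j => dx i (fun t' x' => v t' x' j) t x.
Definition def (v : vfield) : mfield := symf (grad v).
Definition hess (u : sfield) : mfield :=
  fun t x i j => dx i (dx j u) t x.
Definition inc (F : mfield) : mfield := curl (transf (curl F)).

Definition maddf (F G : mfield) : mfield := fun t x i j => F t x i j + G t x i j.
Definition mscalef (c : R) (F : mfield) : mfield := fun t x i j => c * F t x i j.

From Stdlib Require Import Reals Lra Lia List Permutation.
From Coquelicot Require Import Coquelicot.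
Open Scope R_scope.
Import ListNotations.

(* On the cylinder [0, T] × Omega every field of the statement is a finite linear combination of
   partial derivatives of entries of gamma and A, or of time integrals ∫_0^t of such.  Smooth
   partial derivatives commute and gamma is symmetric, so these combinations have a normal form,
   and identities between them become linear arithmetic.
   Differentiating the second evolution equation in time and inserting the first gives
   S gamma_tt = - sym curl curl S gamma; with div div S gamma = 0 and the invertibility of S this
   is the first equation, because beta_t = div S gamma / 2.  For the second, div S (gamma_t - 2 def
   beta) is the curl of Psi = div Aᵀ / 2 + curl beta; the first evolution equation gives
   Psi_t = 0, and Psi(0) = 0 because curl vskw A0 = (div A0 - div A0ᵀ) / 2 and div A0 = 0. *)

(** * Space-time coordinates and Schwarz's theorem *)

Definition st_coord (p : R * R3) (d : nat) : R :=
  match d with O => fst p | S k => coord (snd p) k end.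

Definition st_upd (p : R * R3) (d : nat) (s : R) : R * R3 :=
  match d with O => (s, snd p) | S k => (fst p, upd (snd p) k s) end.

Definition uncurry_st {X : Type} (g : R -> R3 -> X) (p : R * R3) : X := g (fst p) (snd p).

Lemma pd_st_upd d g p :
  uncurry_st (pd d g) p = Derive (fun s => uncurry_st g (st_upd p d s)) (st_coord p d).
Proof. destruct p, d; reflexivity. Qed.

Lemma ex_pd_st_upd d g t x :
  ex_pd d g t x <-> ex_derive (fun s => uncurry_st g (st_upd (t, x) d s)) (st_coord (t, x) d).
Proof. destruct d; reflexivity. Qed.

Lemma st_coord_upd p d s : st_coord (st_upd p d s) d = s.
Proof. destruct p as [t [[a b] c]], d as [|[|[|d]]]; reflexivity. Qed.

Lemma st_upd_upd p d u v : st_upd (st_upd p d u) d v = st_upd p d v.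
Proof. destruct p as [t [[a b] c]], d as [|[|[|d]]]; reflexivity. Qed.

Lemma st_upd_coord p d : st_upd p d (st_coord p d) = p.
Proof. destruct p as [t [[a b] c]], d as [|[|[|d]]]; reflexivity. Qed.

Lemma st_upd_comm p d1 d2 u v : (d1 <= 3)%nat -> (d2 <= 3)%nat -> d1 <> d2 ->
  st_upd (st_upd p d1 u) d2 v = st_upd (st_upd p d2 v) d1 u.
Proof.
  destruct p as [t [[a b] c]]; intros.
  destruct d1 as [|[|[|[|d1]]]], d2 as [|[|[|[|d2]]]]; try lia; reflexivity.
Qed.

Lemma st_coord_upd_neq p d1 d2 u : (d1 <= 3)%nat -> (d2 <= 3)%nat -> d1 <> d2 ->
  st_coord (st_upd p d1 u) d2 = st_coord p d2.
Proof.
  destruct p as [t [[a b] c]]; intros.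
  destruct d1 as [|[|[|[|d1]]]], d2 as [|[|[|[|d2]]]]; try lia; reflexivity.
Qed.

(* [coord] and [upd] read every index beyond 2 as 2, so directions beyond 3 repeat direction 3. *)
Lemma pd_min3 d : pd d = pd (Nat.min d 3).
Proof. destruct d as [|[|[|[|d]]]]; reflexivity. Qed.

Lemma ex_pd_min3 d : ex_pd d = ex_pd (Nat.min d 3).
Proof. destruct d as [|[|[|[|d]]]]; reflexivity. Qed.

Lemma iter_pd_app l1 l2 g : iter_pd l1 (iter_pd l2 g) = iter_pd (l1 ++ l2) g.
Proof. unfold iter_pd; now rewrite fold_right_app. Qed.

Lemma upd_coord x k : upd x k (coord x k) = x.
Proof. destruct x as [[a b] c], k as [|[|k]]; reflexivity. Qed.

Lemma dx_upd k h t x u : dx k h t (upd x k u) = Derive (fun z => h t (upd x k z)) u.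
Proof. destruct x as [[a b] c], k as [|[|k]]; reflexivity. Qed.

Lemma ex_pd_upd k h t x u :
  ex_pd (S k) h t (upd x k u) <-> ex_derive (fun z => h t (upd x k z)) u.
Proof. destruct x as [[a b] c], k as [|[|k]]; reflexivity. Qed.

Lemma continuous_pair {A B C : UniformSpace} (f : A -> B) (g : A -> C) (a : A) :
  continuous f a -> continuous g a -> continuous (fun y => (f y, g y)) a.
Proof.
  intros Hf Hg P [e HP]; unfold filtermap.
  apply (filter_imp (F := locally a) (fun y => ball (f a) e (f y) /\ ball (g a) e (g y))).
  - intros y [H1 H2]; now apply HP.
  - apply filter_and; [apply Hf | apply Hg]; apply locally_ball.
Qed.

Lemma continuous_fst_comp {A B C : UniformSpace} (f : A -> B * C) (a : A) :
  continuous f a -> continuous (fun y => fst (f y)) a.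
Proof. intros Hf; apply continuous_comp; auto; destruct (f a); apply continuous_fst. Qed.

Lemma continuous_snd_comp {A B C : UniformSpace} (f : A -> B * C) (a : A) :
  continuous f a -> continuous (fun y => snd (f y)) a.
Proof. intros Hf; apply continuous_comp; auto; destruct (f a); apply continuous_snd. Qed.

Ltac solve_continuous := repeat match goal with
  | |- continuous (fun y => (@?F y, @?G y)) _ => refine (continuous_pair F G _ _ _)
  | |- continuous (fun y => fst (@?F y)) _ => refine (continuous_fst_comp F _ _)
  | |- continuous (fun y => snd (@?F y)) _ => refine (continuous_snd_comp F _ _)
  | |- continuous (fun y => y) _ => apply continuous_id
  | |- continuous (fun _ => ?c) _ => apply continuous_const
  end.

Lemma continuous_st_upd_uncurried d (z : (R * R3) * R) :
  continuous (fun z : (R * R3) * R => st_upd (fst z) d (snd z)) z.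
Proof. destruct d as [|[|[|k]]]; unfold st_upd, upd; simpl; solve_continuous. Qed.

Lemma continuous_st_upd p d s : continuous (fun s => st_upd p d s) s.
Proof.
  apply (continuous_comp (fun s : R => (p, s)) (fun z : (R * R3) * R => st_upd (fst z) d (snd z))).
  - solve_continuous.
  - apply continuous_st_upd_uncurried.
Qed.

Lemma continuous_upd x k u : continuous (fun u => upd x k u) u.
Proof. destruct k as [|[|k]]; unfold upd; solve_continuous. Qed.

Lemma locally_preimage_open {A B : UniformSpace} (f : A -> B) (a : A) (P : B -> Prop) :
  continuous f a -> open P -> P (f a) -> locally a (fun y => P (f y)).
Proof. intros Hf HP Pa; now apply Hf, HP. Qed.

Section Slice.

Variables (p : R * R3) (d1 d2 : nat).
Hypotheses (Hd1 : (d1 <= 3)%nat) (Hd2 : (d2 <= 3)%nat) (Hd12 : d1 <> d2).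

Definition slice (w : R * R) : R * R3 := st_upd (st_upd p d1 (fst w)) d2 (snd w).

Lemma slice_upd1 u v z : st_upd (slice (u, v)) d1 z = slice (z, v).
Proof.
  unfold slice; simpl.
  rewrite (st_upd_comm _ d2 d1) by lia; now rewrite st_upd_upd.
Qed.

Lemma slice_upd2 u v z : st_upd (slice (u, v)) d2 z = slice (u, z).
Proof. apply st_upd_upd. Qed.

Lemma slice_coord1 u v : st_coord (slice (u, v)) d1 = u.
Proof. unfold slice; simpl; rewrite st_coord_upd_neq by lia; apply st_coord_upd. Qed.

Lemma slice_coord2 u v : st_coord (slice (u, v)) d2 = v.
Proof. apply st_coord_upd. Qed.

Lemma slice_center : slice (st_coord p d1, st_coord p d2) = p.
Proof. unfold slice; simpl; now rewrite !st_upd_coord. Qed.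

Lemma continuous_slice w : continuous slice w.
Proof.
  apply (continuous_comp_2 (fun w : R * R => st_upd p d1 (fst w)) (fun w : R * R => snd w)
           (fun q s => st_upd q d2 s)).
  - apply (continuous_comp (fun w : R * R => fst w) (fun s => st_upd p d1 s)).
    + solve_continuous.
    + apply continuous_st_upd.
  - solve_continuous.
  - apply continuous_st_upd_uncurried.
Qed.

Lemma pd_slice1 h u v :
  uncurry_st (pd d1 h) (slice (u, v)) = Derive (fun z => uncurry_st h (slice (z, v))) u.
Proof.
  rewrite pd_st_upd, slice_coord1.
  apply Derive_ext; intro z; now rewrite slice_upd1.
Qed.

Lemma pd_slice2 h u v :
  uncurry_st (pd d2 h) (slice (u, v)) = Derive (fun z => uncurry_st h (slice (u, z))) v.
Proof.
  rewrite pd_st_upd, slice_coord2.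
  apply Derive_ext; intro z; now rewrite slice_upd2.
Qed.

Lemma ex_pd_slice1 h u v :
  uncurry_st (ex_pd d1 h) (slice (u, v)) -> ex_derive (fun z => uncurry_st h (slice (z, v))) u.
Proof.
  unfold uncurry_st at 1; rewrite ex_pd_st_upd, <- surjective_pairing, slice_coord1.
  apply ex_derive_ext; intro z; now rewrite slice_upd1.
Qed.

Lemma ex_pd_slice2 h u v :
  uncurry_st (ex_pd d2 h) (slice (u, v)) -> ex_derive (fun z => uncurry_st h (slice (u, z))) v.
Proof.
  unfold uncurry_st at 1; rewrite ex_pd_st_upd, <- surjective_pairing, slice_coord2.
  apply ex_derive_ext; intro z; now rewrite slice_upd2.
Qed.

Lemma pd_pd_slice12 h u v :
  uncurry_st (pd d1 (pd d2 h)) (slice (u, v))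
  = Derive (fun z => Derive (fun s => uncurry_st h (slice (z, s))) v) u.
Proof. rewrite pd_slice1; apply Derive_ext; intro z; apply pd_slice2. Qed.

Lemma pd_pd_slice21 h u v :
  uncurry_st (pd d2 (pd d1 h)) (slice (u, v))
  = Derive (fun z => Derive (fun s => uncurry_st h (slice (s, z))) u) v.
Proof. rewrite pd_slice2; apply Derive_ext; intro z; apply pd_slice1. Qed.

Lemma continuity_2d_pt_slice h u v :
  continuous (uncurry_st h) (slice (u, v)) ->
  continuity_2d_pt (fun a b => uncurry_st h (slice (a, b))) u v.
Proof.
  intros Hh; apply continuity_2d_pt_filterlim.
  apply (continuous_comp slice (uncurry_st h)); [apply continuous_slice | exact Hh].
Qed.

End Slice.

Section SmoothOnOpen.

Variable U : R -> R3 -> Prop.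
Hypothesis HU : open (uncurry_st U).

Lemma smooth_on_iter_pd g l : smooth_on U g -> smooth_on U (iter_pd l g).
Proof. intros Hg l' t x Hx; rewrite iter_pd_app; now apply Hg. Qed.

Lemma smooth_on_pd g d : smooth_on U g -> smooth_on U (pd d g).
Proof. apply (smooth_on_iter_pd g [d]). Qed.

Lemma smooth_on_ex_pd g d t x : smooth_on U g -> U t x -> ex_pd d g t x.
Proof. intros Hg Hx; rewrite ex_pd_min3; apply (Hg [] t x Hx); lia. Qed.

Lemma smooth_on_continuous g t x : smooth_on U g -> U t x -> continuous (uncurry_st g) (t, x).
Proof. intros Hg Hx; apply (Hg [] t x Hx). Qed.

Lemma locally_2d_slice_ex_derive g p d1 d2 : smooth_on U g -> uncurry_st U p ->
  (d1 <= 3)%nat -> (d2 <= 3)%nat -> d1 <> d2 ->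
  let f u v := uncurry_st g (slice p d1 d2 (u, v)) in
  locally_2d (fun u v =>
      ex_derive (fun z => f z v) u /\ ex_derive (fun z => f u z) v /\
      ex_derive (fun z => Derive (fun s => f z s) v) u /\
      ex_derive (fun z => Derive (fun s => f s z) u) v)
    (st_coord p d1) (st_coord p d2).
Proof.
  intros Hg Hp H1 H2 H12 f; apply locally_2d_locally.
  apply (filter_imp (fun w => uncurry_st U (slice p d1 d2 w))).
  2:{ apply (locally_preimage_open (slice p d1 d2) _ (uncurry_st U));
        [apply continuous_slice | exact HU | now rewrite slice_center]. }
  intros [u v] Huv.
  assert (Hex : forall l d, uncurry_st (ex_pd d (iter_pd l g)) (slice p d1 d2 (u, v))).
  { intros l d; apply smooth_on_ex_pd; [now apply smooth_on_iter_pd | exact Huv]. }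
  repeat split.
  - apply (ex_pd_slice1 p d1 d2 H1 H2 H12 g), (Hex []).
  - apply (ex_pd_slice2 p d1 d2 g), (Hex []).
  - apply (ex_derive_ext (fun z => uncurry_st (pd d2 g) (slice p d1 d2 (z, v)))).
    { intro z; now rewrite pd_slice2. }
    apply (ex_pd_slice1 p d1 d2 H1 H2 H12 (pd d2 g)), (Hex [d2]).
  - apply (ex_derive_ext (fun z => uncurry_st (pd d1 g) (slice p d1 d2 (u, z)))).
    { intro z; now rewrite pd_slice1. }
    apply (ex_pd_slice2 p d1 d2 (pd d1 g)), (Hex [d1]).
Qed.

Lemma pd_comm_neq g t x d1 d2 : smooth_on U g -> U t x ->
  (d1 <= 3)%nat -> (d2 <= 3)%nat -> d1 <> d2 ->
  pd d1 (pd d2 g) t x = pd d2 (pd d1 g) t x.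
Proof.
  intros Hg Hx H1 H2 H12; set (p := (t, x)).
  change (uncurry_st (pd d1 (pd d2 g)) p = uncurry_st (pd d2 (pd d1 g)) p).
  rewrite <- (slice_center p d1 d2), pd_pd_slice12, pd_pd_slice21 by lia.
  apply Schwarz; [now apply locally_2d_slice_ex_derive| |].
  - apply (continuity_2d_pt_ext (fun u v => uncurry_st (pd d1 (pd d2 g)) (slice p d1 d2 (u, v)))).
    { intros u v; now rewrite pd_pd_slice12. }
    apply continuity_2d_pt_slice; rewrite slice_center by lia.
    apply smooth_on_continuous; [now apply (smooth_on_iter_pd g [d1; d2]) | exact Hx].
  - apply (continuity_2d_pt_ext (fun u v => uncurry_st (pd d2 (pd d1 g)) (slice p d1 d2 (u, v)))).
    { intros u v; now rewrite pd_pd_slice21. }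
    apply continuity_2d_pt_slice; rewrite slice_center by lia.
    apply smooth_on_continuous; [now apply (smooth_on_iter_pd g [d2; d1]) | exact Hx].
Qed.

Lemma pd_comm g t x d1 d2 : smooth_on U g -> U t x ->
  pd d1 (pd d2 g) t x = pd d2 (pd d1 g) t x.
Proof.
  intros Hg Hx; rewrite (pd_min3 d1), (pd_min3 d2).
  destruct (Nat.eq_dec (Nat.min d1 3) (Nat.min d2 3)) as [E|E]; [now rewrite E|].
  apply pd_comm_neq; auto; lia.
Qed.

Lemma pd_ext_on d F G t x : (forall s y, U s y -> F s y = G s y) -> U t x ->
  pd d F t x = pd d G t x.
Proof.
  intros H Hx.
  change (uncurry_st (pd d F) (t, x) = uncurry_st (pd d G) (t, x)); rewrite !pd_st_upd.
  apply Derive_ext_loc.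
  apply (filter_imp (fun s => uncurry_st U (st_upd (t, x) d s))).
  - intros s Hs; apply H, Hs.
  - apply (locally_preimage_open (st_upd (t, x) d) _ (uncurry_st U)); auto.
    + apply continuous_st_upd.
    + now rewrite st_upd_coord.
Qed.

Lemma iter_pd_perm g l l' t x : smooth_on U g -> Permutation l l' -> U t x ->
  iter_pd l g t x = iter_pd l' g t x.
Proof.
  intros Hg HP; revert t x.
  induction HP as [|d l1 l2 _ IH|d1 d2 l|l1 l2 l3 _ IH1 _ IH2]; intros t x Hx.
  - reflexivity.
  - now apply pd_ext_on.
  - apply pd_comm; auto; now apply smooth_on_iter_pd.
  - now rewrite IH1, IH2.
Qed.

End SmoothOnOpen.

Lemma is_derive_vanishing_on_segment (h : R -> R) a b t l : a < b -> a <= t <= b ->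
  is_derive h t l -> (forall s, a <= s <= b -> h s = 0) -> l = 0.
Proof.
  intros Hab Ht Hd Hz.
  destruct (Req_dec l 0) as [|Hl]; [assumption | exfalso].
  apply is_derive_Reals in Hd.
  destruct (Hd (Rabs l) (Rabs_pos_lt l Hl)) as [delta Hdelta].
  assert (Hstep : exists e, e <> 0 /\ Rabs e < delta /\ a <= t + e <= b).
  { pose proof (cond_pos delta).
    destruct (Rlt_or_le t b).
    - exists (Rmin (delta / 2) (b - t)).
      pose proof (Rmin_l (delta / 2) (b - t)); pose proof (Rmin_r (delta / 2) (b - t)).
      assert (0 < Rmin (delta / 2) (b - t)) by (apply Rmin_glb_lt; lra).
      rewrite Rabs_pos_eq; lra.
    - exists (- Rmin (delta / 2) (b - a)).
      pose proof (Rmin_l (delta / 2) (b - a)); pose proof (Rmin_r (delta / 2) (b - a)).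
      assert (0 < Rmin (delta / 2) (b - a)) by (apply Rmin_glb_lt; lra).
      rewrite Rabs_Ropp, Rabs_pos_eq; lra. }
  destruct Hstep as [e [He0 [Hed Hee]]].
  specialize (Hdelta e He0 Hed).
  rewrite (Hz (t + e)), (Hz t) in Hdelta by lra.
  replace ((0 - 0) / e - l) with (- l) in Hdelta by (field; exact He0).
  rewrite Rabs_Ropp in Hdelta; lra.
Qed.

Lemma Derive_ext_segment (f g : R -> R) a b t : a < b -> a <= t <= b ->
  ex_derive f t -> ex_derive g t -> (forall s, a <= s <= b -> f s = g s) ->
  Derive f t = Derive g t.
Proof.
  intros Hab Ht Hf Hg Hfg.
  apply Rminus_diag_uniq, (is_derive_vanishing_on_segment (fun s => f s - g s) a b t); auto.
  - apply (is_derive_minus f g); now apply Derive_correct.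
  - intros s Hs; rewrite Hfg by exact Hs; ring.
Qed.

Lemma pd_plus d F G t x : ex_pd d F t x -> ex_pd d G t x ->
  pd d (fun t x => F t x + G t x) t x = pd d F t x + pd d G t x.
Proof. destruct d; apply Derive_plus. Qed.

Lemma ex_pd_plus d F G t x : ex_pd d F t x -> ex_pd d G t x ->
  ex_pd d (fun t x => F t x + G t x) t x.
Proof.
  destruct d; simpl; intros.
  - now apply (ex_derive_plus (fun s => F s x) (fun s => G s x)).
  - now apply (ex_derive_plus (fun s => F t (upd x d s)) (fun s => G t (upd x d s))).
Qed.

Lemma pd_scal d c F t x : pd d (fun t x => c * F t x) t x = c * pd d F t x.
Proof. destruct d; apply Derive_scal. Qed.

Lemma ex_pd_scal d c F t x : ex_pd d F t x -> ex_pd d (fun t x => c * F t x) t x.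
Proof. destruct d; apply ex_derive_scal. Qed.

Lemma pd_zero d t x : pd d (fun _ _ => 0) t x = 0.
Proof. destruct d; simpl; unfold dt, dx; apply Derive_const. Qed.

Lemma ex_pd_zero d t x : ex_pd d (fun _ _ => 0) t x.
Proof. destruct d; simpl; apply ex_derive_const. Qed.

Lemma sum3_ext (f g : nat -> R) : (forall k, (k < 3)%nat -> f k = g k) -> sum3 f = sum3 g.
Proof. intros H; unfold sum3; rewrite !H by lia; reflexivity. Qed.

(** * Linear differential expressions in gamma and A *)

(* [Mono c integrated b l p q] stands for [c * iter_pd l F_b (p, q)], or for
   [c * ∫_0^t iter_pd l F_b (p, q)] when [integrated]; [F_0] is [gamma], any other [F_b] is [A],
   and indices beyond 2 are read as 2 (see [entry]). *)
Inductive mono : Type := Mono (c : R) (integrated : bool) (b : nat) (l : list nat) (p q : nat).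

Definition mono_integrated (m : mono) : bool := let 'Mono _ i _ _ _ _ := m in i.

Definition dexpr : Type := list mono.
Definition vexpr : Type := nat -> dexpr.
Definition mexpr : Type := nat -> nat -> dexpr.

Definition integral_free (e : dexpr) : Prop :=
  List.Forall (fun m => mono_integrated m = false) e.

Definition mono_pd (d : nat) (m : mono) : mono :=
  match m with
  | Mono c true b l p q => if Nat.eqb d 0 then Mono c false b l p q else Mono c true b (d :: l) p q
  | Mono c false b l p q => Mono c false b (d :: l) p q
  end.

Definition expr_pd (d : nat) (e : dexpr) : dexpr := map (mono_pd d) e.
Definition expr_int (e : dexpr) : dexpr :=
  map (fun '(Mono c _ b l p q) => Mono c true b l p q) e.
Definition expr_scale (k : R) (e : dexpr) : dexpr :=
  map (fun '(Mono c i b l p q) => Mono (k * c) i b l p q) e.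
Definition expr_sum3 (f : nat -> dexpr) : dexpr := f 0%nat ++ f 1%nat ++ f 2%nat.

Fixpoint insert (a : nat) (l : list nat) : list nat :=
  match l with
  | [] => [a]
  | b :: r => if Nat.leb a b then a :: b :: r else b :: insert a r
  end.

Fixpoint insertion_sort (l : list nat) : list nat :=
  match l with [] => [] | a :: r => insert a (insertion_sort r) end.

Lemma Permutation_insert a l : Permutation (a :: l) (insert a l).
Proof.
  induction l as [|b r IH]; simpl; auto.
  destruct (Nat.leb a b); auto.
  eapply perm_trans; [apply perm_swap | now apply perm_skip].
Qed.

Lemma Permutation_insertion_sort l : Permutation l (insertion_sort l).
Proof.
  induction l as [|a r IH]; simpl; auto.
  eapply perm_trans; [apply perm_skip, IH | apply Permutation_insert].
Qed.

Definition normal_index (b p q : nat) : nat * nat :=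
  if Nat.eqb b 0 then (Nat.min p q, Nat.max p q) else (p, q).

Definition mono_normal (m : mono) : mono :=
  let 'Mono c i b l p q := m in
  Mono c i b (insertion_sort l) (fst (normal_index b p q)) (snd (normal_index b p q)).

Lemma integral_free_pd d e : integral_free e -> integral_free (expr_pd d e).
Proof.
  induction 1 as [|[c i b l p q] r Hm Hr IH]; constructor; auto.
  simpl in Hm; subst i; reflexivity.
Qed.

Definition escale (k : R) (E : mexpr) : mexpr := fun i j => expr_scale k (E i j).
Definition eadd (E F : mexpr) : mexpr := fun i j => E i j ++ F i j.
Definition eS (E : mexpr) : mexpr :=
  fun i j => E j i ++ expr_scale (- kron i j) (expr_sum3 (fun k => E k k)).
Definition etrans (E : mexpr) : mexpr := fun i j => E j i.
Definition esym (E : mexpr) : mexpr := fun i j => expr_scale (/ 2) (E i j ++ E j i).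
Definition ecurl (E : mexpr) : mexpr := fun i j =>
  expr_sum3 (fun k => expr_sum3 (fun l => expr_scale (eps i k l) (expr_pd (S k) (E l j)))).
Definition ediv (E : mexpr) : vexpr := fun i => expr_sum3 (fun j => expr_pd (S j) (E j i)).
Definition edivv (E : vexpr) : dexpr := expr_sum3 (fun i => expr_pd (S i) (E i)).
Definition egrad (E : vexpr) : mexpr := fun i j => expr_pd (S i) (E j).
Definition ehess (e : dexpr) : mexpr := fun i j => expr_pd (S i) (expr_pd (S j) e).
Definition etr (E : mexpr) : dexpr := expr_sum3 (fun i => E i i).
Definition evskw (E : mexpr) : vexpr := fun i =>
  expr_scale (- / 2) (expr_sum3 (fun j => expr_sum3 (fun k => expr_scale (eps i j k) (E j k)))).
Definition ecurlv (E : vexpr) : vexpr := fun i =>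
  expr_sum3 (fun k => expr_sum3 (fun l => expr_scale (eps i k l) (expr_pd (S k) (E l)))).
Definition edtM (E : mexpr) : mexpr := fun i j => expr_pd 0 (E i j).
Definition edtV (E : vexpr) : vexpr := fun i => expr_pd 0 (E i).
Definition efield (b : nat) : mexpr := fun p q => [Mono 1 false b [] p q].

Section Cylinder.

Variables (Omega : R3 -> Prop) (T : R) (U : R -> R3 -> Prop).
Hypotheses (HOmega : open Omega) (HT : 0 < T) (HU : open (uncurry_st U))
  (HUcov : forall t x, 0 <= t <= T -> Omega x -> U t x).

Definition cylinder (t : R) (x : R3) : Prop := 0 <= t <= T /\ Omega x.

Lemma cylinder_in_U t x : cylinder t x -> U t x.
Proof. intros [Ht Hx]; now apply HUcov. Qed.

Lemma locally_Omega_line x k : Omega x -> locally (coord x k) (fun u => Omega (upd x k u)).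
Proof.
  intros Hx; apply (locally_preimage_open (fun u => upd x k u)); auto.
  - apply continuous_upd.
  - now rewrite upd_coord.
Qed.

Lemma continuous_in_time h t x : smooth_on U h -> U t x -> continuous (fun s => h s x) t.
Proof.
  intros Hh Hx.
  apply (continuous_comp (fun s => (s, x)) (uncurry_st h)).
  - solve_continuous.
  - now apply (smooth_on_continuous U).
Qed.

Lemma locally_time_segment t x : cylinder t x ->
  locally t (fun s => forall r, Rmin 0 s <= r <= Rmax 0 s -> U r x).
Proof.
  intros [Ht Hx].
  assert (HUt : locally t (fun s => U s x)).
  { apply (locally_preimage_open (fun s => (s, x)) t (uncurry_st U)); auto.
    - solve_continuous.
    - now apply HUcov. }
  destruct HUt as [e He]; exists e; intros s Hs r Hr.
  destruct (Rle_dec 0 r), (Rle_dec r T); try now apply HUcov.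
  all: apply He; change (Rabs (r - t) < e); change (Rabs (s - t) < e) in Hs.
  all: destruct (Rle_dec 0 s);
    [rewrite Rmin_left, Rmax_right in Hr by lra | rewrite Rmin_right, Rmax_left in Hr by lra].
  all: apply Rle_lt_trans with (Rabs (s - t)); [|exact Hs].
  all: unfold Rabs; destruct (Rcase_abs (r - t)), (Rcase_abs (s - t)); lra.
Qed.

Lemma is_derive_time_integral h t x : smooth_on U h -> cylinder t x ->
  is_derive (fun s => RInt (fun r => h r x) 0 s) t (h t x).
Proof.
  intros Hh Hx.
  apply (is_derive_RInt (V := R_NormedModule) (fun r => h r x) _ 0).
  - eapply filter_imp; [|apply (locally_time_segment t x Hx)]; intros s Hs.
    apply (RInt_correct (V := R_CompleteNormedModule)),
          (ex_RInt_continuous (V := R_CompleteNormedModule)).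
    intros r Hr; now apply continuous_in_time, Hs.
  - now apply continuous_in_time, cylinder_in_U.
Qed.

Lemma is_derive_space_integral h t x k : smooth_on U h -> cylinder t x ->
  is_derive (fun u => RInt (fun s => h s (upd x k u)) 0 t) (coord x k)
            (RInt (fun s => dx k h s x) 0 t).
Proof.
  intros Hh [Ht Hx].
  assert (Hseg : forall s y, Rmin 0 t <= s <= Rmax 0 t -> Omega y -> U s y).
  { rewrite Rmin_left, Rmax_right by lra; intros s y Hs Hy; apply HUcov; auto; lra. }
  apply (is_derive_RInt_param (fun u s => h s (upd x k u))).
  - eapply filter_imp; [|apply (locally_Omega_line x k Hx)]; intros u Hu s Hs.
    apply ex_pd_upd, (smooth_on_ex_pd U); auto.
  - intros s Hs; apply continuity_2d_pt_filterlim.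
    assert (Hc : continuous (fun w : R * R => uncurry_st (dx k h) (snd w, upd x k (fst w)))
                            (coord x k, s)).
    { apply (continuous_comp (fun w : R * R => (snd w, upd x k (fst w))) (uncurry_st (dx k h))).
      - refine (continuous_pair (fun w : R * R => snd w) (fun w : R * R => upd x k (fst w)) _ _ _);
          [solve_continuous|].
        apply (continuous_comp (fun w : R * R => fst w) (fun u => upd x k u));
          [solve_continuous | apply continuous_upd].
      - simpl; rewrite upd_coord.
        apply (smooth_on_continuous U), Hseg; auto; now apply (smooth_on_pd U h (S k)). }
    unfold continuous, uncurry_st in Hc; cbn [fst snd] in *; rewrite dx_upd in Hc.
    revert Hc; apply filterlim_ext; intros [u v]; apply dx_upd.
  - eapply filter_imp; [|apply (locally_Omega_line x k Hx)]; intros u Hu.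
    apply (ex_RInt_continuous (V := R_CompleteNormedModule)); intros s Hs.
    now apply continuous_in_time, Hseg.
Qed.

Variables (gamma A : mfield).
Hypotheses (Hgsm : smooth_on_m U gamma) (HAsm : smooth_on_m U A)
  (HgS : forall t x, 0 <= t <= T -> Omega x -> is_sym (gamma t x)).

(* At [t = 0] and [t = T] only one side is available, hence the differentiability hypotheses. *)
Lemma dt_ext_cylinder F G t x : (forall s y, cylinder s y -> F s y = G s y) -> cylinder t x ->
  ex_pd 0 F t x -> ex_pd 0 G t x -> dt F t x = dt G t x.
Proof.
  intros H [Ht Hx] HF HG; apply (Derive_ext_segment _ _ 0 T); auto.
  intros s Hs; apply H; split; auto.
Qed.

Lemma dx_ext_cylinder k F G t x : (forall s y, cylinder s y -> F s y = G s y) -> cylinder t x ->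
  dx k F t x = dx k G t x.
Proof.
  intros H [Ht Hx]; apply Derive_ext_loc.
  eapply filter_imp; [|apply (locally_Omega_line x k Hx)].
  intros u Hu; apply H; split; auto.
Qed.

Lemma pd_ext_cylinder d F G t x : (forall s y, cylinder s y -> F s y = G s y) -> cylinder t x ->
  ex_pd d F t x -> ex_pd d G t x -> pd d F t x = pd d G t x.
Proof.
  destruct d; intros; [now apply dt_ext_cylinder | now apply dx_ext_cylinder].
Qed.

Definition entry (b p q : nat) : sfield :=
  fun t x => (if Nat.eqb b 0 then gamma else A) t x (Nat.min p 2) (Nat.min q 2).

Lemma smooth_on_entry b p q : smooth_on U (entry b p q).
Proof. unfold entry; destruct (Nat.eqb b 0); [apply Hgsm | apply HAsm]; lia. Qed.

Lemma smooth_on_atom b l p q : smooth_on U (iter_pd l (entry b p q)).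
Proof. apply smooth_on_iter_pd, smooth_on_entry. Qed.

Definition atom (integrated : bool) (b : nat) (l : list nat) (p q : nat) : sfield :=
  if integrated then fun t x => RInt (fun s => iter_pd l (entry b p q) s x) 0 t
  else iter_pd l (entry b p q).

Definition eval_mono (m : mono) : sfield :=
  fun t x => let 'Mono c i b l p q := m in c * atom i b l p q t x.

Fixpoint eval (e : dexpr) (t : R) (x : R3) : R :=
  match e with [] => 0 | m :: r => eval_mono m t x + eval r t x end.

Lemma eval_app e1 e2 t x : eval (e1 ++ e2) t x = eval e1 t x + eval e2 t x.
Proof. induction e1 as [|m r IH]; simpl; [ring | rewrite IH; ring]. Qed.

Lemma eval_scale k e t x : eval (expr_scale k e) t x = k * eval e t x.
Proof.
  induction e as [|[c i b l p q] r IH]; [simpl; ring|].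
  unfold expr_scale in *; simpl in *; rewrite IH; ring.
Qed.

Lemma eval_sum3 f t x : eval (expr_sum3 f) t x = sum3 (fun k => eval (f k) t x).
Proof. unfold expr_sum3, sum3; rewrite !eval_app; ring. Qed.

Lemma pd_eval_mono m d t x : (mono_integrated m = false /\ U t x) \/ cylinder t x ->
  ex_pd d (eval_mono m) t x /\ pd d (eval_mono m) t x = eval_mono (mono_pd d m) t x.
Proof.
  destruct m as [c [|] b l p q]; intros Hm.
  - destruct Hm as [[Hm _] | Hx]; [discriminate|].
    assert (Hsm := smooth_on_atom b l p q).
    destruct d as [|k].
    + assert (HD := is_derive_time_integral _ t x Hsm Hx).
      split; [apply ex_pd_scal; eexists; exact HD|].
      change (pd 0 (fun t x => c * atom true b l p q t x) t x = c * atom false b l p q t x).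
      rewrite pd_scal; f_equal; now apply is_derive_unique.
    + assert (HD := is_derive_space_integral _ t x k Hsm Hx).
      split; [apply ex_pd_scal; eexists; exact HD|].
      change (pd (S k) (fun t x => c * atom true b l p q t x) t x
              = c * atom true b (S k :: l) p q t x).
      rewrite pd_scal; f_equal; now apply is_derive_unique.
  - assert (Hx : U t x) by (destruct Hm as [[_ Hx] | Hx]; auto; now apply cylinder_in_U).
    split.
    + apply ex_pd_scal, (smooth_on_ex_pd U), Hx; apply smooth_on_atom.
    + apply (pd_scal d c (atom false b l p q)).
Qed.

Lemma pd_eval e d t x : (integral_free e /\ U t x) \/ cylinder t x ->
  ex_pd d (eval e) t x /\ pd d (eval e) t x = eval (expr_pd d e) t x.
Proof.
  induction e as [|m r IH]; intros He.
  - split; [apply ex_pd_zero | apply pd_zero].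
  - assert (Hm : (mono_integrated m = false /\ U t x) \/ cylinder t x).
    { destruct He as [[Hf Hx] | Hx]; [left; now inversion Hf | now right]. }
    assert (Hr : (integral_free r /\ U t x) \/ cylinder t x).
    { destruct He as [[Hf Hx] | Hx]; [left; now inversion Hf | now right]. }
    destruct (IH Hr) as [Er1 Er2], (pd_eval_mono m d t x Hm) as [Em1 Em2].
    change (eval (m :: r)) with (fun t x => eval_mono m t x + eval r t x).
    split; [now apply ex_pd_plus|].
    rewrite pd_plus by assumption; simpl; now rewrite Em2, Er2.
Qed.

Lemma continuous_eval_in_time e t x : integral_free e -> U t x ->
  continuous (fun s => eval e s x) t.
Proof.
  induction e as [|[c i b l p q] r IH]; intros He Hx; simpl.
  - apply continuous_const.
  - inversion He as [|? ? Hm Hr]; simpl in Hm; subst i.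
    apply (continuous_plus (fun s => c * atom false b l p q s x) (fun s => eval r s x));
      [|now apply IH].
    apply (continuous_mult (fun _ => c) (fun s => atom false b l p q s x));
      [apply continuous_const | apply continuous_in_time; [apply smooth_on_atom | exact Hx]].
Qed.

Lemma RInt_eval e s x : integral_free e -> (forall r, Rmin 0 s <= r <= Rmax 0 s -> U r x) ->
  RInt (fun r => eval e r x) 0 s = eval (expr_int e) s x.
Proof.
  intros He Hseg.
  induction e as [|[c i b l p q] r IH]; simpl.
  - rewrite RInt_const; unfold scal; simpl; unfold mult; simpl; ring.
  - inversion He as [|? ? Hm Hr]; simpl in Hm; subst i.
    assert (Hatom : ex_RInt (fun r => atom false b l p q r x) 0 s).
    { apply (ex_RInt_continuous (V := R_CompleteNormedModule)); intros r' Hr'.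
      apply continuous_in_time; [apply smooth_on_atom | now apply Hseg]. }
    assert (Hrest : ex_RInt (fun r' => eval r r' x) 0 s).
    { apply (ex_RInt_continuous (V := R_CompleteNormedModule)); intros r' Hr'.
      now apply continuous_eval_in_time, Hseg. }
    assert (Hscaled : ex_RInt (fun r => c * atom false b l p q r x) 0 s)
      by now apply (ex_RInt_scal (V := R_CompleteNormedModule)).
    rewrite (RInt_plus (V := R_CompleteNormedModule) (fun r => c * atom false b l p q r x)
               (fun r' => eval r r' x)), IH by assumption.
    unfold plus; simpl; f_equal.
    exact (RInt_scal (V := R_CompleteNormedModule) (fun r => atom false b l p q r x) 0 s c Hatom).
Qed.

Lemma eval_sub_initial e t x : integral_free e -> cylinder t x ->
  eval e t x - eval e 0 x = eval (expr_int (expr_pd 0 e)) t x.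
Proof.
  intros He [Ht Hx].
  assert (Hseg : forall r, Rmin 0 t <= r <= Rmax 0 t -> cylinder r x).
  { rewrite Rmin_left, Rmax_right by lra; intros r Hr; split; auto; lra. }
  assert (HsegU : forall r, Rmin 0 t <= r <= Rmax 0 t -> U r x).
  { intros r Hr; now apply cylinder_in_U, Hseg. }
  rewrite <- RInt_eval by auto using integral_free_pd.
  symmetry; apply is_RInt_unique, (is_RInt_derive (fun s => eval e s x)).
  - intros s Hs; destruct (pd_eval e 0 s x (or_intror (Hseg s Hs))) as [E1 E2].
    rewrite <- E2; now apply Derive_correct.
  - intros s Hs; now apply continuous_eval_in_time, HsegU; auto using integral_free_pd.
Qed.

Lemma iter_pd_gamma_entry_sym l p q t x : cylinder t x ->
  iter_pd l (entry 0 p q) t x = iter_pd l (entry 0 q p) t x.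
Proof.
  revert t x; induction l as [|d l IH]; intros t x Hx.
  - destruct Hx as [Ht Hx]; unfold entry; simpl; apply HgS; auto; lia.
  - apply pd_ext_cylinder; auto;
      (apply (smooth_on_ex_pd U); [apply smooth_on_atom | now apply cylinder_in_U]).
Qed.

Lemma iter_pd_entry_normal b l p q t x : cylinder t x ->
  iter_pd l (entry b p q) t x
  = iter_pd (insertion_sort l) (entry b (fst (normal_index b p q)) (snd (normal_index b p q))) t x.
Proof.
  intros Hx.
  rewrite (iter_pd_perm U HU _ l (insertion_sort l)); auto using smooth_on_entry,
    Permutation_insertion_sort, cylinder_in_U.
  unfold normal_index; destruct (Nat.eqb_spec b 0) as [->|]; [|reflexivity].
  destruct (Nat.le_ge_cases p q).
  - now rewrite Nat.min_l, Nat.max_r.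
  - rewrite Nat.min_r, Nat.max_l by assumption; now apply iter_pd_gamma_entry_sym.
Qed.

Lemma eval_normal e t x : cylinder t x -> eval e t x = eval (map mono_normal e) t x.
Proof.
  intros Hx; induction e as [|[c [|] b l p q] r IH]; simpl; auto; rewrite IH; f_equal; f_equal.
  - destruct Hx as [Ht Hx]; apply RInt_ext; intros s Hs.
    rewrite Rmin_left, Rmax_right in Hs by lra.
    apply iter_pd_entry_normal; split; auto; lra.
  - now apply iter_pd_entry_normal.
Qed.

Definition represents (F : sfield) (e : dexpr) : Prop :=
  forall t x, cylinder t x -> F t x = eval e t x.

Definition represents_v (v : vfield) (E : vexpr) : Prop :=
  forall i, (i < 3)%nat -> represents (fun t x => v t x i) (E i).

Definition represents_m (F : mfield) (E : mexpr) : Prop :=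
  forall i j, (i < 3)%nat -> (j < 3)%nat -> represents (fun t x => F t x i j) (E i j).

Lemma represents_dx k F e : represents F e -> represents (dx k F) (expr_pd (S k) e).
Proof.
  intros H t x Hx; rewrite (dx_ext_cylinder k F (eval e)) by assumption.
  apply (pd_eval e (S k) t x (or_intror Hx)).
Qed.

Lemma represents_dt F e : represents F e -> (forall t x, cylinder t x -> ex_pd 0 F t x) ->
  represents (dt F) (expr_pd 0 e).
Proof.
  intros H HF t x Hx; destruct (pd_eval e 0 t x (or_intror Hx)) as [Ee1 Ee2].
  rewrite (dt_ext_cylinder F (eval e)); auto.
Qed.

Lemma represents_plus F G e1 e2 : represents F e1 -> represents G e2 ->
  represents (fun t x => F t x + G t x) (e1 ++ e2).
Proof. intros H1 H2 t x Hx; rewrite eval_app, H1, H2; auto. Qed.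

Lemma represents_scale k F e : represents F e -> represents (fun t x => k * F t x) (expr_scale k e).
Proof. intros H t x Hx; rewrite eval_scale, H; auto. Qed.

Lemma represents_sum3 F E : (forall k, (k < 3)%nat -> represents (F k) (E k)) ->
  represents (fun t x => sum3 (fun k => F k t x)) (expr_sum3 E).
Proof.
  intros H t x Hx; rewrite eval_sum3; apply sum3_ext; intros k Hk; now apply H.
Qed.

Lemma represents_ext F G e : (forall t x, cylinder t x -> F t x = G t x) ->
  represents G e -> represents F e.
Proof. intros E H t x Hx; rewrite E; auto. Qed.

Lemma represents_m_efield b : represents_m (if Nat.eqb b 0 then gamma else A) (efield b).
Proof.
  intros i j Hi Hj t x Hx; simpl; unfold entry; rewrite !Nat.min_l by lia; ring.
Qed.

Lemma represents_m_S F E : represents_m F E -> represents_m (Sf F) (eS E).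
Proof.
  intros H i j Hi Hj t x Hx; unfold Sf, Sop, tr, eS.
  rewrite eval_app, eval_scale, eval_sum3, (H j i), (sum3_ext _ (fun k => eval (E k k) t x));
    auto; [ring | intros; now apply H].
Qed.

Lemma represents_m_trans F E : represents_m F E -> represents_m (transf F) (etrans E).
Proof. intros H i j Hi Hj; now apply H. Qed.

Lemma represents_m_sym F E : represents_m F E -> represents_m (symf F) (esym E).
Proof.
  intros H i j Hi Hj t x Hx; unfold symf, sym, esym.
  rewrite eval_scale, eval_app, (H i j), (H j i) by auto; unfold Rdiv; ring.
Qed.

Lemma represents_m_curl F E : represents_m F E -> represents_m (curl F) (ecurl E).
Proof.
  intros H i j Hi Hj; apply represents_sum3; intros k Hk; apply represents_sum3; intros l Hl.
  apply represents_scale, represents_dx; now apply H.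
Qed.

Lemma represents_v_div F E : represents_m F E -> represents_v (div F) (ediv E).
Proof.
  intros H i Hi; apply represents_sum3; intros j Hj; apply represents_dx; now apply H.
Qed.

Lemma represents_divv v E : represents_v v E -> represents (divv v) (edivv E).
Proof. intros H; apply represents_sum3; intros i Hi; apply represents_dx; now apply H. Qed.

Lemma represents_m_grad v E : represents_v v E -> represents_m (grad v) (egrad E).
Proof. intros H i j Hi Hj; apply represents_dx; now apply H. Qed.

Lemma represents_m_def v E : represents_v v E -> represents_m (def v) (esym (egrad E)).
Proof. intros H; now apply represents_m_sym, represents_m_grad. Qed.

Lemma represents_m_hess u e : represents u e -> represents_m (hess u) (ehess e).
Proof. intros H i j Hi Hj; now apply represents_dx, represents_dx. Qed.

Lemma represents_tr F E : represents_m F E -> represents (trf F) (etr E).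
Proof. intros H; apply represents_sum3; intros k Hk; now apply H. Qed.

Lemma represents_v_vskw F E : represents_m F E -> represents_v (fun t x => vskw (F t x)) (evskw E).
Proof.
  intros H i Hi; apply represents_scale, represents_sum3; intros j Hj.
  apply represents_sum3; intros k Hk; apply represents_scale; now apply H.
Qed.

Lemma represents_m_add F G E1 E2 : represents_m F E1 -> represents_m G E2 ->
  represents_m (maddf F G) (eadd E1 E2).
Proof. intros H1 H2 i j Hi Hj; now apply represents_plus; [apply H1 | apply H2]. Qed.

Lemma represents_m_scale c F E : represents_m F E -> represents_m (mscalef c F) (escale c E).
Proof. intros H i j Hi Hj; now apply represents_scale, H. Qed.

Lemma represents_m_dt F E : represents_m F E ->
  (forall i j t x, (i < 3)%nat -> (j < 3)%nat -> cylinder t x ->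
     ex_pd 0 (fun t x => F t x i j) t x) ->
  represents_m (dtM F) (edtM E).
Proof. intros H HF i j Hi Hj; apply represents_dt; auto. Qed.

Definition egamma : mexpr := efield 0.
Definition eA : mexpr := efield 1.

Lemma represents_m_gamma : represents_m gamma egamma.
Proof. apply (represents_m_efield 0). Qed.

Lemma represents_m_A : represents_m A eA.
Proof. apply (represents_m_efield 1). Qed.

Lemma ex_dt_gamma i j t x : (i < 3)%nat -> (j < 3)%nat -> cylinder t x ->
  ex_pd 0 (fun t x => gamma t x i j) t x.
Proof. intros; apply (smooth_on_ex_pd U); [now apply Hgsm | now apply cylinder_in_U]. Qed.

Lemma ex_dt_A i j t x : (i < 3)%nat -> (j < 3)%nat -> cylinder t x ->
  ex_pd 0 (fun t x => A t x i j) t x.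
Proof. intros; apply (smooth_on_ex_pd U); [now apply HAsm | now apply cylinder_in_U]. Qed.

Lemma ex_dtt_gamma i j t x : (i < 3)%nat -> (j < 3)%nat -> cylinder t x ->
  ex_pd 0 (fun t x => dtM gamma t x i j) t x.
Proof.
  intros; apply (smooth_on_ex_pd U); [|now apply cylinder_in_U].
  now apply (smooth_on_pd U (fun t x => gamma t x i j) 0), Hgsm.
Qed.

Definition vanishes (e : dexpr) : Prop := represents (fun _ _ => 0) e.

Lemma vanishes_of_represents F e : represents F e -> (forall t x, cylinder t x -> F t x = 0) ->
  vanishes e.
Proof. intros H H0 t x Hx; now rewrite <- H, H0. Qed.

Lemma represents_vanishes F e : represents F e -> vanishes e ->
  forall t x, cylinder t x -> F t x = 0.
Proof. intros H H0 t x Hx; now rewrite H, <- H0. Qed.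

Lemma vanishes_pd d e : vanishes e -> vanishes (expr_pd d e).
Proof.
  intros H; destruct d as [|k].
  - apply (vanishes_of_represents (dt (fun _ _ => 0))).
    + apply represents_dt; auto; intros; apply (ex_pd_zero 0).
    + intros; apply (pd_zero 0).
  - apply (vanishes_of_represents (dx k (fun _ _ => 0))).
    + now apply represents_dx.
    + intros; apply (pd_zero (S k)).
Qed.

Lemma vanishes_int e : integral_free e -> vanishes e -> vanishes (expr_int e).
Proof.
  intros He H t x [Ht Hx].
  rewrite <- RInt_eval; auto.
  - rewrite (RInt_ext _ (fun _ => 0)), RInt_const.
    + unfold scal; simpl; unfold mult; simpl; ring.
    + rewrite Rmin_left, Rmax_right by lra; intros s Hs; symmetry; apply H; split; auto; lra.
  - rewrite Rmin_left, Rmax_right by lra; intros s Hs; apply cylinder_in_U; split; auto; lra.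
Qed.

(** * The linearized York equations *)

Variable A0 : R3 -> mat.
Hypotheses
  (Hdiv : forall t x i, 0 <= t <= T -> Omega x -> (i < 3)%nat -> div A t x i = 0)
  (Hevo1 : forall t x i j, 0 <= t <= T -> Omega x -> (i < 3)%nat -> (j < 3)%nat ->
     dtM A t x i j + curl (Sf gamma) t x i j = 0)
  (Hevo2 : forall t x i j, 0 <= t <= T -> Omega x -> (i < 3)%nat -> (j < 3)%nat ->
     Sf (dtM gamma) t x i j - symf (curl A) t x i j = 0)
  (Hcons : forall t x, 0 <= t <= T -> Omega x -> divdiv (Sf gamma) t x = 0)
  (HA0 : forall x, Omega x -> A 0 x = A0 x).

Lemma evolution_A_vanishes p q : (p < 3)%nat -> (q < 3)%nat ->
  vanishes (edtM eA p q ++ ecurl (eS egamma) p q).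
Proof.
  intros Hp Hq; apply (vanishes_of_represents (fun t x => dtM A t x p q + curl (Sf gamma) t x p q)).
  - apply represents_plus.
    + apply (represents_m_dt _ _ represents_m_A ex_dt_A); auto.
    + apply (represents_m_curl _ _ (represents_m_S _ _ represents_m_gamma)); auto.
  - intros t x [Ht Hx]; now apply Hevo1.
Qed.

Lemma integrated_evolution_A_vanishes k p q : (p < 3)%nat -> (q < 3)%nat ->
  vanishes (expr_int (expr_pd (S k) (edtM eA p q ++ ecurl (eS egamma) p q))).
Proof.
  intros Hp Hq; apply vanishes_int; [repeat constructor|].
  now apply vanishes_pd, evolution_A_vanishes.
Qed.

Lemma evolution_gamma_vanishes p q : (p < 3)%nat -> (q < 3)%nat ->
  vanishes (eS (edtM egamma) p q ++ expr_scale (-1) (esym (ecurl eA) p q)).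
Proof.
  intros Hp Hq.
  apply (vanishes_of_represents (fun t x => Sf (dtM gamma) t x p q + -1 * symf (curl A) t x p q)).
  - apply represents_plus.
    + apply (represents_m_S _ _ (represents_m_dt _ _ represents_m_gamma ex_dt_gamma)); auto.
    + apply represents_scale, (represents_m_sym _ _ (represents_m_curl _ _ represents_m_A)); auto.
  - intros t x [Ht Hx]; rewrite <- (Hevo2 t x p q) by auto; ring.
Qed.

Lemma divdiv_S_gamma_vanishes : vanishes (edivv (ediv (eS egamma))).
Proof.
  apply (vanishes_of_represents (divdiv (Sf gamma))).
  - apply represents_divv, represents_v_div, represents_m_S, represents_m_gamma.
  - intros t x [Ht Hx]; now apply Hcons.
Qed.

Lemma div_A_vanishes i : (i < 3)%nat -> vanishes (ediv eA i).
Proof.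
  intros Hi; apply (vanishes_of_represents (fun t x => div A t x i)).
  - apply (represents_v_div _ _ represents_m_A); auto.
  - intros t x [Ht Hx]; now apply Hdiv.
Qed.

Definition alpha : sfield := fun t x => / 2 * trf gamma t x.

Definition beta : vfield := fun t x i =>
  / 2 * RInt (fun s => div (Sf gamma) s x i) 0 t + vskw (A0 x) i.

(* [vskw A0] is written as [vskw A(t) - ∫_0^t ∂_t vskw A], so no value at time 0 remains. *)
Definition ebeta : vexpr := fun i =>
  expr_scale (/ 2) (expr_int (ediv (eS egamma) i)) ++ evskw eA i
  ++ expr_scale (-1) (expr_int (expr_pd 0 (evskw eA i))).

(* The field Psi = div Aᵀ / 2 + curl beta, whose curl is div S (gamma_t - 2 def beta). *)
Definition egauge_residual : vexpr := fun i =>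
  expr_scale (/ 2) (ediv (etrans eA) i) ++ ecurlv ebeta i.

Lemma integral_free_div_S_gamma i : integral_free (ediv (eS egamma) i).
Proof. repeat constructor. Qed.

Lemma div_S_gamma_eval i t x : (i < 3)%nat -> U t x ->
  div (Sf gamma) t x i = eval (ediv (eS egamma) i) t x.
Proof.
  intros Hi Hx; unfold div, ediv; rewrite eval_sum3; apply sum3_ext; intros j Hj.
  assert (HS : forall s y, Sf gamma s y j i = eval (eS egamma j i) s y).
  { intros s y; unfold Sf, Sop, tr, eS, egamma, efield.
    rewrite eval_app, eval_scale, eval_sum3; unfold sum3; simpl; unfold entry; simpl.
    rewrite !Nat.min_l by lia; ring. }
  transitivity (pd (S j) (eval (eS egamma j i)) t x).
  - apply Derive_ext; intros; apply HS.
  - apply (pd_eval _ (S j) t x); left; split; [repeat constructor | exact Hx].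
Qed.

Lemma beta_eval_near i t x : (i < 3)%nat -> cylinder t x ->
  locally t (fun s => beta s x i = / 2 * eval (expr_int (ediv (eS egamma) i)) s x + vskw (A0 x) i).
Proof.
  intros Hi Hx.
  eapply filter_imp; [|apply (locally_time_segment t x Hx)]; intros s Hs.
  unfold beta; rewrite <- RInt_eval by auto using integral_free_div_S_gamma.
  do 2 f_equal; apply RInt_ext; intros r Hr; apply div_S_gamma_eval; auto.
  apply Hs; split; apply Rlt_le, Hr.
Qed.

Lemma ex_dt_beta i t x : (i < 3)%nat -> cylinder t x -> ex_pd 0 (fun t x => beta t x i) t x.
Proof.
  intros Hi Hx; simpl.
  apply (ex_derive_ext_loc
           (fun s => / 2 * eval (expr_int (ediv (eS egamma) i)) s x + vskw (A0 x) i)).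
  - eapply filter_imp; [|apply (beta_eval_near i t x Hi Hx)]; intros s Hs; now rewrite Hs.
  - apply (ex_derive_plus _ (fun _ => vskw (A0 x) i)); [|apply ex_derive_const].
    apply ex_derive_scal, (pd_eval _ 0 t x (or_intror Hx)).
Qed.

Lemma represents_v_beta : represents_v beta ebeta.
Proof.
  intros i Hi t x Hx.
  rewrite (locally_singleton _ _ (beta_eval_near i t x Hi Hx)).
  destruct Hx as [Ht Hx].
  assert (HA00 := represents_v_vskw _ _ represents_m_A i Hi 0 x ltac:(split; auto; lra)).
  cbv beta in HA00; rewrite <- (HA0 x Hx), HA00.
  unfold ebeta; rewrite !eval_app, !eval_scale, <- eval_sub_initial; [ring | | split; auto].
  repeat constructor.
Qed.

Lemma represents_v_dt_beta : represents_v (dtV beta) (edtV ebeta).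
Proof.
  intros i Hi; apply represents_dt; [now apply represents_v_beta|].
  intros; now apply ex_dt_beta.
Qed.

Ltac eval_nf P :=
  eval cbn [eval eval_mono map app expr_sum3 eS etrans esym ecurl ecurlv ediv edivv egrad ehess
            etr evskw eadd escale edtM edtV efield egamma eA ebeta egauge_residual expr_scale
            expr_int expr_pd mono_pd mono_normal normal_index insertion_sort insert kron eps
            Nat.eqb Nat.leb Nat.min Nat.max fst snd] in P.

Ltac normalize_goal t x Hx :=
  rewrite (eval_normal _ t x Hx); match goal with |- ?G => let G' := eval_nf G in change G' end.

Ltac for3 tac := tac 0%nat; tac 1%nat; tac 2%nat.

Ltac add_fact H t x Hx :=
  let F := fresh "F" in
  pose proof (H t x Hx) as F; rewrite (eval_normal _ t x Hx) in F;
  let P := type of F in let P' := eval_nf P in change P' in F.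

Lemma S_gamma_wave_vanishes p q : (p < 3)%nat -> (q < 3)%nat ->
  vanishes (eS (edtM (edtM egamma)) p q ++ esym (ecurl (ecurl (eS egamma))) p q).
Proof.
  intros Hp Hq t x Hx.
  destruct p as [|[|[|]]]; try lia; destruct q as [|[|[|]]]; try lia.
  all: add_fact (vanishes_pd 0 _ (evolution_gamma_vanishes _ _ Hp Hq)) t x Hx.
  all: for3 ltac:(fun k => for3 ltac:(fun l =>
         add_fact (vanishes_pd (S k) _ (evolution_A_vanishes l _ ltac:(lia) Hp)) t x Hx;
         add_fact (vanishes_pd (S k) _ (evolution_A_vanishes l _ ltac:(lia) Hq)) t x Hx)).
  all: normalize_goal t x Hx; lra.
Qed.

Lemma york_evolution_vanishes i j : (i < 3)%nat -> (j < 3)%nat ->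
  vanishes (edtM (edtM egamma) i j ++ eS (ecurl (etrans (ecurl egamma))) i j
            ++ expr_scale (-2) (ehess (expr_scale (/ 2) (etr egamma)) i j)
            ++ expr_scale (-2) (esym (egrad (edtV ebeta)) i j)).
Proof.
  intros Hi Hj t x Hx.
  add_fact divdiv_S_gamma_vanishes t x Hx.
  for3 ltac:(fun p => for3 ltac:(fun q =>
    add_fact (S_gamma_wave_vanishes p q ltac:(lia) ltac:(lia)) t x Hx)).
  destruct i as [|[|[|]]]; try lia; destruct j as [|[|[|]]]; try lia; normalize_goal t x Hx; lra.
Qed.

Lemma gauge_residual_vanishes i : (i < 3)%nat -> vanishes (egauge_residual i).
Proof.
  intros Hi t x Hx.
  for3 ltac:(fun l => add_fact (div_A_vanishes l ltac:(lia)) t x Hx).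
  for3 ltac:(fun k => for3 ltac:(fun l => for3 ltac:(fun j =>
    add_fact (integrated_evolution_A_vanishes k l j ltac:(lia) ltac:(lia)) t x Hx))).
  destruct i as [|[|[|]]]; try lia; normalize_goal t x Hx; lra.
Qed.

Lemma york_momentum_vanishes i : (i < 3)%nat ->
  vanishes (ediv (eS (eadd (edtM egamma) (escale (-2) (esym (egrad ebeta))))) i).
Proof.
  intros Hi t x Hx.
  for3 ltac:(fun m => for3 ltac:(fun l =>
    add_fact (vanishes_pd (S m) _ (gauge_residual_vanishes l ltac:(lia))) t x Hx)).
  for3 ltac:(fun m => for3 ltac:(fun p => for3 ltac:(fun q =>
    add_fact (vanishes_pd (S m) _ (evolution_gamma_vanishes p q ltac:(lia) ltac:(lia))) t x Hx))).
  destruct i as [|[|[|]]]; try lia; normalize_goal t x Hx; lra.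
Qed.

Lemma york_evolution i j t x : (i < 3)%nat -> (j < 3)%nat -> cylinder t x ->
  dtM (dtM gamma) t x i j + Sf (inc gamma) t x i j - 2 * hess alpha t x i j
  - 2 * def (dtV beta) t x i j = 0.
Proof.
  intros Hi Hj; revert t x; refine (represents_vanishes _ _ _ (york_evolution_vanishes i j Hi Hj)).
  apply (represents_ext _ (fun t x => dtM (dtM gamma) t x i j + (Sf (inc gamma) t x i j
           + (-2 * hess alpha t x i j + -2 * def (dtV beta) t x i j)))); [intros; ring|].
  apply represents_plus; [|apply represents_plus; [|apply represents_plus; apply represents_scale]].
  - exact (represents_m_dt _ _ (represents_m_dt _ _ represents_m_gamma ex_dt_gamma) ex_dtt_gamma
             i j Hi Hj).
  - exact (represents_m_S _ _ (represents_m_curl _ _ (represents_m_trans _ _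
             (represents_m_curl _ _ represents_m_gamma))) i j Hi Hj).
  - exact (represents_m_hess _ _ (represents_scale _ _ _ (represents_tr _ _ represents_m_gamma))
             i j Hi Hj).
  - exact (represents_m_def _ _ represents_v_dt_beta i j Hi Hj).
Qed.

Lemma york_momentum i t x : (i < 3)%nat -> cylinder t x ->
  div (Sf (maddf (dtM gamma) (mscalef (-2) (def beta)))) t x i = 0.
Proof.
  intros Hi; revert t x; refine (represents_vanishes _ _ _ (york_momentum_vanishes i Hi)).
  exact (represents_v_div _ _ (represents_m_S _ _ (represents_m_add _ _ _ _
           (represents_m_dt _ _ represents_m_gamma ex_dt_gamma)
           (represents_m_scale _ _ _ (represents_m_def _ _ represents_v_beta)))) i Hi).
Qed.

End Cylinder.

Theorem theorem2p1
  (Omega : R3 -> Prop) (T : R)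
  (A gamma : mfield) (A0 gamma0 : R3 -> mat)
  (U : R -> R3 -> Prop)
  (HOmega : open Omega)
  (HT : 0 < T)
  (HU : open (fun p : R * R3 => U (fst p) (snd p)))
  (HUcov : forall t x, 0 <= t <= T -> Omega x -> U t x)
  (HAsm : smooth_on_m U A)
  (Hgsm : smooth_on_m U gamma)
  (HAT : forall t x, 0 <= t <= T -> Omega x -> is_tracefree (A t x))
  (HgS : forall t x, 0 <= t <= T -> Omega x -> is_sym (gamma t x))
  (Hdiv : forall t x i, 0 <= t <= T -> Omega x -> (i < 3)%nat ->
            div A t x i = 0)
  (Hevo1 : forall t x i j, 0 <= t <= T -> Omega x -> (i < 3)%nat -> (j < 3)%nat ->
            dtM A t x i j + curl (Sf gamma) t x i j = 0)
  (Hevo2 : forall t x i j, 0 <= t <= T -> Omega x -> (i < 3)%nat -> (j < 3)%nat ->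
            Sf (dtM gamma) t x i j - symf (curl A) t x i j = 0)
  (Hcons : forall t x, 0 <= t <= T -> Omega x -> divdiv (Sf gamma) t x = 0)
  (HA0 : forall x, Omega x -> A 0 x = A0 x)
  (Hg0 : forall x, Omega x -> gamma 0 x = gamma0 x) :
  let alpha : sfield := fun t x => / 2 * trf gamma t x in
  let beta : vfield := fun t x i =>
      / 2 * RInt (fun s => div (Sf gamma) s x i) 0 t + vskw (A0 x) i in
  forall t x, 0 <= t <= T -> Omega x ->
    (forall i j, (i < 3)%nat -> (j < 3)%nat ->
       dtM (dtM gamma) t x i j + Sf (inc gamma) t x i j
       - 2 * hess alpha t x i j - 2 * def (dtV beta) t x i j = 0) /\
    (forall i, (i < 3)%nat ->
       div (Sf (maddf (dtM gamma) (mscalef (-2) (def beta)))) t x i = 0) /\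
    divdiv (Sf gamma) t x = 0.
Proof.
  intros alpha beta t x Ht Hx.
  assert (Hcyl : cylinder Omega T t x) by (split; assumption).
  split; [|split].
  - intros i j Hi Hj.
    exact (york_evolution Omega T U HOmega HT HU HUcov gamma A Hgsm HAsm HgS A0
             Hevo1 Hevo2 Hcons HA0 i j t x Hi Hj Hcyl).
  - intros i Hi.
    exact (york_momentum Omega T U HOmega HT HU HUcov gamma A Hgsm HAsm HgS A0
             Hdiv Hevo1 Hevo2 HA0 i t x Hi Hcyl).
  - now apply Hcons.
Qed.
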